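(* For all integers $n\ge 1$ and $k\ge 3$, the book graph $B_{n,k}$ is odd prime.
   Context: All graphs are finite and simple. A graph $G$ of order $N$ is odd prime if there is a bijection $\ell:V(G)\to\{1,3,\ldots,2N-1\}$ with $\gcd(\ell(u),\ell(v))=1$ for every edge $uv$. The book graph $B_{n,k}$ consists of $n$ cycles of length $k$ (pages) all sharing one common edge $uv$ and otherwise disjoint: it has vertices $u,v$ and $w_{i,j}$ for $1\le i\le n$, $1\le j\le k-2$, with edges $uv$, $uw_{i,1}$, $w_{i,j}w_{i,j+1}$ ($1\le j\le k-3$) and $w_{i,k-2}v$ for each $i$. It has $(k-2)n+2$ vertices. *)

From mathcomp Require Import all_boot.
Set Implicit Arguments. Unset Strict Implicit. Unset Printing Implicit Defensive.

Definition simple_graph (V : finType) (e : rel V) : Prop :=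
  irreflexive e /\ symmetric e.

Definition odd_labels (N : nat) (m : nat) : bool := odd m && (m < 2 * N).

Definition odd_prime_labeling (V : finType) (e : rel V) (l : V -> nat) : Prop :=
  [/\ injective l,
      (forall x, odd_labels #|V| (l x)),
      (forall m, odd_labels #|V| m -> exists x, l x = m)
    & (forall x y, e x y -> gcdn (l x) (l y) = 1)].

Definition odd_prime (V : finType) (e : rel V) : Prop :=
  exists l : V -> nat, odd_prime_labeling e l.

(* Book graph B_{n,k}.  Vertices: inl true = u, inl false = v,
   inr (i, j) = w_{i+1, j+1}  for i < n, j < k-2  (0-indexed). *)
Definition book_vertex (n k : nat) : finType := (bool + ('I_n * 'I_(k - 2)))%type.

Definition book_edge (n k : nat) (x y : book_vertex n k) : bool :=
  match x, y with
  | inl a, inl b => a != b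
  | inl true, inr (_, j) | inr (_, j), inl true => val j == 0 (* u w_{i,1} *)
  | inl false, inr (_, j) | inr (_, j), inl false =>
      val j == k - 3                                          (* w_{i,k-2} v *)
  | inr (i, j), inr (i', j') =>
      (i == i') && (((val j).+1 == val j') || ((val j').+1 == val j))
  end.

(* Label u by 1, v by a prime p with N - 1 < p <= 2N - 2, where N is the number
   of vertices (Bertrand's postulate), and give the page vertices, page after
   page, the remaining odd labels 3, 5, ..., 2N - 1 in increasing order.  Two
   consecutive vertices of a page then get odd labels differing by 2 or 4, hence
   coprime; every label is below 3p, so all labels other than p are coprime to p.

   Bertrand's postulate is Erdős' argument: if no prime lies in (n, 2n], every
   prime power p^e dividing 'C(2n, n) is at most 2n, e <= 1 when p^2 > 2n, and
   e = 0 when 2n/3 < p <= n; with the primorial bound prod_(p <= m) p <= 4^m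
   this gives 4^n <= 2n 'C(2n, n) <= (2n)^(sqrt(2n) + 2) 4^(2n/3), which fails
   for n > 2^13.  Smaller n are covered by a chain of primes, each less than
   twice its predecessor. *)

From mathcomp Require Import all_boot zify.
Set Implicit Arguments. Unset Strict Implicit. Unset Printing Implicit Defensive.

(** * Prime factors of the central binomial coefficient *)

Lemma sum_divn_exp_widen p m B B' : 1 < p -> m < p ^ B -> B <= B' ->
  \sum_(1 <= i < B) m %/ p ^ i = \sum_(1 <= i < B') m %/ p ^ i.
Proof.
move=> p_gt1 m_lt BB'; have [B0 | B_gt0] := posnP B.
  rewrite B0 expn0 ltnS leqn0 in m_lt.
  by rewrite (eqP m_lt) !big1 // => i _; rewrite div0n.
rewrite [RHS](@big_cat_nat _ _ _ B) //= [X in _ + X]big1_seq ?addn0 // => i.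
rewrite mem_index_iota => /andP[_ /andP[Bi _]]; apply: divn_small.
exact: (leq_trans m_lt (leq_pexp2l (ltnW p_gt1) Bi)).
Qed.

Lemma logn_fact_sum p m B : prime p -> m < p ^ B ->
  logn p m`! = \sum_(1 <= i < B) m %/ p ^ i.
Proof.
move=> p_pr m_lt; have p_gt1 := prime_gt1 p_pr.
rewrite logn_fact // (@sum_divn_exp_widen p m B (maxn B m.+1)) ?leq_maxl //.
apply: sum_divn_exp_widen => //; last exact: leq_maxr.
exact: ltnW (ltn_expl _ p_gt1).
Qed.

Lemma prod_logn_lt m b : 0 < m -> (forall p, prime p -> p %| m -> p < b) ->
  m = \prod_(0 <= p < b) p ^ logn p m.
Proof.
move=> m_gt0 lt_b; rewrite -{1}(partnT m_gt0) (@eq_in_partn _ [pred p | p < b]); last first.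
  by move=> p; rewrite mem_primes => /and3P[p_pr _ p_dvd]; rewrite !inE lt_b.
rewrite (@widen_partn (m + b)) ?leq_addr // [RHS](@big_nat_widen _ _ _ 0 b (m + b).+1) //.
lia.
Qed.

(* The carry out of the digit [n %% d] when adding [n + n]; for [d = p ^ i] it is
   the [i]-th term of Legendre's formula for ['C(2n, n)]. *)
Definition bin_carry n d := (2 * (n %% d)) %/ d.

Lemma divn_double n d : 0 < d -> (2 * n) %/ d = 2 * (n %/ d) + bin_carry n d.
Proof. by move=> d_gt0; rewrite {1}(divn_eq n d) mulnDr mulnA divnMDl. Qed.

Lemma bin_carry_le1 n d : 0 < d -> bin_carry n d <= 1.
Proof. by move=> d_gt0; rewrite -ltnS ltn_divLR // ltn_pmul2l // ltn_mod. Qed.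

Lemma logn_central_bin p n B : prime p -> 2 * n < p ^ B ->
  logn p 'C(2 * n, n) = \sum_(1 <= i < B) bin_carry n (p ^ i).
Proof.
move=> p_pr lt_B; have := bin_fact (leq_addl n n); rewrite addnK addnn -mul2n.
move/(congr1 (logn p)); rewrite !lognM ?muln_gt0 ?fact_gt0 ?bin_gt0 ?leq_pmull //.
rewrite !(@logn_fact_sum p _ B) //; last lia.
under [X in _ = X]eq_bigr => i _ do rewrite divn_double ?expn_gt0 ?prime_gt0 //.
by rewrite big_split -big_distrr /=; lia.
Qed.

Lemma logn_central_bin_le_trunc_log p n : prime p ->
  logn p 'C(2 * n, n) <= trunc_log p (2 * n).
Proof.
move=> p_pr; set T := trunc_log p (2 * n).
rewrite (@logn_central_bin p n T.+1) ?trunc_log_ltn ?prime_gt1 //.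
apply: leq_trans (_ : \sum_(1 <= i < T.+1) 1 <= _); last by rewrite sum_nat_const_nat; lia.
by apply: leq_sum => i _; rewrite bin_carry_le1 ?expn_gt0 ?prime_gt0.
Qed.

Lemma pfactor_central_bin_le p n : 0 < n -> prime p ->
  p ^ logn p 'C(2 * n, n) <= 2 * n.
Proof.
move=> n_gt0 p_pr; apply: leq_trans (trunc_logP (prime_gt1 p_pr) _); last lia.
exact: leq_pexp2l (prime_gt0 p_pr) (logn_central_bin_le_trunc_log n p_pr).
Qed.

Lemma logn_central_bin_le1 p n : prime p -> 2 * n < p * p -> logn p 'C(2 * n, n) <= 1.
Proof.
move=> p_pr lt_pp; rewrite (@logn_central_bin p n 2) // big_nat1.
by rewrite bin_carry_le1 ?expn1 ?prime_gt0.
Qed.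

Lemma logn_central_bin_eq0 p n : prime p -> p <= n -> 2 * n < 3 * p -> 2 * n < p * p ->
  logn p 'C(2 * n, n) = 0.
Proof.
move=> p_pr le_pn lt_3p lt_pp; rewrite (@logn_central_bin p n 2) // big_nat1.
rewrite /bin_carry expn1 divn_small // -(subnK le_pn) modnDr modn_small; lia.
Qed.

(** * Chebyshev bounds *)

Lemma prime_dvd_fact_le p m : prime p -> p %| m`! -> p <= m.
Proof.
move=> p_pr; elim: m => [|m IH]; first by rewrite dvdn1 => /eqP p1; rewrite p1 in p_pr.
by rewrite factS Euclid_dvdM // => /orP[/dvdn_leq -> // | /IH]; lia.
Qed.

Lemma dvdn_prod_primes m a b :
  (forall p, prime p -> a <= p < b -> p %| m) -> \prod_(a <= p < b | prime p) p %| m.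
Proof.
elim: b => [|b IH] dvd_m; first by rewrite big_geq.
have [le_ab | lt_ba] := leqP a b; last by rewrite big_geq.
have dvd_prod : \prod_(a <= p < b | prime p) p %| m.
  by apply: IH => p p_pr /andP[le_ap lt_pb]; apply: dvd_m; rewrite // le_ap ltnW.
rewrite big_mkcond big_nat_recr // -big_mkcond /=; case: ifP => b_pr; last by rewrite muln1.
rewrite Gauss_dvd ?dvd_prod ?dvd_m ?le_ab ?leqnn // coprime_sym prime_coprime //.
rewrite Euclid_dvd_prod // big_seq_cond big1 // => p.
by rewrite mem_index_iota => /andP[/andP[_ lt_pb] p_pr]; rewrite dvdn_prime2 // gtn_eqF.
Qed.

Lemma bin_add_binS_le n i : 'C(n, i) + 'C(n, i.+1) <= 2 ^ n.
Proof.
elim: n i => [|n IH] [|i] //.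
  by rewrite bin0 bin1 expnS; have := IH 0; rewrite bin0 bin1; lia.
by rewrite !binS expnS; have := IH i; have := IH i.+1; lia.
Qed.

Lemma bin_odd_central_le k : 'C((2 * k).+1, k) <= 4 ^ k.
Proof.
have sym : 'C((2 * k).+1, k.+1) = 'C((2 * k).+1, k).
  by rewrite -[k.+1](_ : (2 * k).+1 - k = k.+1) ?bin_sub; lia.
have := bin_add_binS_le (2 * k).+1 k.
by rewrite sym expnS expnM (_ : 2 ^ 2 = 4) //; lia.
Qed.

Lemma central_binS n : n.+1 * 'C(2 * n.+1, n.+1) = 2 * (2 * n).+1 * 'C(2 * n, n).
Proof.
have half : 'C((2 * n).+2, n.+1) = 2 * 'C((2 * n).+1, n).
  by apply/eqP; rewrite -(eqn_pmul2l (ltn0Sn n)) -mul_bin_diag /=; apply/eqP; lia.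
have sym : 'C((2 * n).+1, n.+1) = 'C((2 * n).+1, n).
  by rewrite -[n.+1](_ : (2 * n).+1 - n = n.+1) ?bin_sub; lia.
have diag := mul_bin_diag (2 * n).+1 n; rewrite /= sym in diag.
by rewrite (_ : 2 * n.+1 = (2 * n).+2) ?half; [rewrite -mulnA diag mulnCA | lia].
Qed.

Lemma exp4_le_central_bin n : 0 < n -> 4 ^ n <= 2 * n * 'C(2 * n, n).
Proof.
case: n => // n _; elim: n => [|n IH]; first by [].
rewrite -mulnA central_binS expnS; apply: leq_trans (leq_mul (leqnn 4) IH) _.
by move: ('C(_, _)) => c; nia.
Qed.

Definition primorial m := \prod_(0 <= p < m.+1 | prime p) p.

Lemma prod_mid_primes_le k :
  \prod_(k.+2 <= p < (2 * k).+2 | prime p) p <= 'C((2 * k).+1, k).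
Proof.
apply: dvdn_leq; first by rewrite bin_gt0; lia.
apply: dvdn_prod_primes => p p_pr /andP[lo hi].
have fact_eq : 'C((2 * k).+1, k) * (k`! * (k.+1)`!) = ((2 * k).+1)`!.
  by rewrite -[k.+1](_ : (2 * k).+1 - k = k.+1) ?bin_fact; lia.
have : p %| ((2 * k).+1)`! by rewrite dvdn_fact ?prime_gt0.
rewrite -fact_eq 2?Euclid_dvdM // => /or3P[// | |] /(prime_dvd_fact_le p_pr); lia.
Qed.

Lemma primorial_le m : primorial m <= 4 ^ m.
Proof.
elim/ltn_ind: m => m IH; have [le_m2 | lt_2m] := leqP m 2.
  by case: m le_m2 {IH} => [|[|[|]]] //; rewrite /primorial unlock.
have [k [m_odd | m_even]] : exists k, m = (2 * k).+1 \/ m = (2 * k).+2.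
  by exists (m.-1./2); have := odd_double_half m.-1; case: odd; rewrite -mul2n; lia.
- subst m; rewrite /primorial (@big_cat_nat _ _ _ k.+2) //=; last lia.
  rewrite (_ : 4 ^ (2 * k).+1 = 4 ^ k.+1 * 4 ^ k); last by rewrite -expnD; congr (_ ^ _); lia.
  apply: leq_mul; first by apply: IH; lia.
  exact: leq_trans (prod_mid_primes_le k) (bin_odd_central_le k).
- subst m; rewrite /primorial big_mkcond big_nat_recr //= -big_mkcond /=.
  have /negbTE -> : ~~ prime (2 * k).+2.
    by apply/negP => /even_prime[|]; rewrite ?oddS ?oddM //; lia.
  rewrite muln1 expnS; apply: leq_trans (IH _ (ltnSn _)) _; lia.
Qed.

Lemma prod_nat_if_le M A B : 0 < B ->
  \prod_(0 <= p < M) (if p <= A then B else 1) <= B ^ A.+1.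
Proof.
move=> B_gt0; suff : \prod_(0 <= p < M) (if p <= A then B else 1) <= B ^ minn M A.+1.
  by move/leq_trans; apply; rewrite leq_pexp2l ?geq_minr.
elim: M => [|M IH]; first by rewrite big_geq.
rewrite big_nat_recr //=; have [le_MA | lt_AM] := leqP M A.
  by rewrite (_ : minn M.+1 A.+1 = (minn M A.+1).+1) ?expnSr ?leq_mul2r ?IH ?orbT; lia.
by rewrite muln1 (_ : minn M.+1 A.+1 = minn M A.+1) //; lia.
Qed.

Lemma central_bin_le_of_prime_gap n a : 0 < n -> 2 * n <= a * a ->
    (forall p, prime p -> n < p -> 2 * n < p) ->
  'C(2 * n, n) <= (2 * n) ^ a.+1 * 4 ^ (2 * n %/ 3).
Proof.
move=> n_gt0 le_a gap; set C := 'C(2 * n, n); set M := 2 * n %/ 3.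
have C_gt0 : 0 < C by rewrite bin_gt0; lia.
have C_eq : C = \prod_(0 <= p < (2 * n).+1) p ^ logn p C.
  apply: prod_logn_lt => // p p_pr p_dvd; rewrite ltnS.
  apply: leq_trans (pfactor_central_bin_le n_gt0 p_pr).
  by rewrite -[p in p <= _]expn1 leq_exp2l ?prime_gt1 // logn_gt0 mem_primes p_pr C_gt0.
pose small p := if p <= a then 2 * n else 1.
pose mid p := if prime p && (p <= M) then p else 1.
have per_prime p : p < (2 * n).+1 -> p ^ logn p C <= small p * mid p.
  move=> lt_p; have [p_pr | p_npr] := boolP (prime p); last first.
    by rewrite /mid /small lognE (negbTE p_npr) /=; case: ifP; lia.
  have mid_gt0 : 0 < mid p by rewrite /mid; case: ifP => // _; apply: prime_gt0.
  have [le_pa | lt_ap] := leqP p a.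
    rewrite /small le_pa; apply: leq_trans (pfactor_central_bin_le n_gt0 p_pr) _.
    exact: leq_pmulr.
  have lt_pp : 2 * n < p * p by nia.
  rewrite /small (leqNgt p a) lt_ap mul1n /mid p_pr /=; have [le_pM | lt_Mp] := leqP p M.
    by rewrite -[p in _ <= p]expn1 leq_exp2l ?prime_gt1 ?logn_central_bin_le1.
  rewrite logn_central_bin_eq0 //; last lia.
  by rewrite leqNgt; apply/negP => /(gap p p_pr); lia.
apply: leq_trans (_ : \prod_(0 <= p < (2 * n).+1) (small p * mid p) <= _).
  rewrite {1}C_eq big_seq [X in _ <= X]big_seq; apply: leq_prod => p.
  by rewrite mem_index_iota => /andP[_ lt_p]; apply: per_prime.
rewrite big_split /=; apply: leq_mul; first by apply: prod_nat_if_le; lia.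
rewrite -big_mkcond /= (eq_bigl (fun p => prime p && (p < M.+1))) => [|p]; last by rewrite ltnS.
rewrite -(@big_nat_widen _ _ _ 0 M.+1); first exact: primorial_le.
by rewrite ltnS leq_div.
Qed.

(** * Bertrand's postulate *)

Lemma bertrand_chain q s n : prime q -> all prime s ->
    path (fun a b => (a < b) && (b <= 2 * a)) q s ->
  q <= 2 * n -> n < last q s -> exists2 p, prime p & n < p <= 2 * n.
Proof.
elim: s q => [|b s IH] q q_pr /= s_pr chain le_q lt_last.
  by exists q; rewrite ?lt_last.
have [lt_nq | le_qn] := ltnP n q; first by exists q; rewrite ?lt_nq.
case/andP: s_pr => b_pr s_pr; case/andP: chain => /andP[_ le_b] chain.
by apply: (IH b) => //; lia.
Qed.

Lemma mul32_le_exp2 t : 8 <= t -> 32 * t <= 2 ^ t.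
Proof.
elim: t => // t IH; rewrite leq_eqVlt => /orP[/eqP <- // | lt_8t].
by rewrite expnS; have := IH lt_8t; lia.
Qed.

Theorem bertrand n : 0 < n -> exists2 p, prime p & n < p <= 2 * n.
Proof.
move=> n_gt0; have [small | large] := ltnP n (2 ^ 13 + 17).
  apply: (@bertrand_chain 2
    [:: 3; 5; 7; 13; 23; 43; 83; 163; 317; 631; 1259; 2503; 4999; 2 ^ 13 + 17]);
  by [vm_compute | lia].
have [/existsP[p /andP[p_pr lt_np]] | no_prime] :=
  boolP [exists p : 'I_(2 * n).+1, prime p && (n < p)].
  by exists p; rewrite // lt_np -ltnS ltn_ord.
have gap p : prime p -> n < p -> 2 * n < p.
  move=> p_pr lt_np; rewrite ltnNge; apply/negP => le_p.
  by move/existsP: no_prime; apply; exists (Ordinal (le_p : p < (2 * n).+1)); rewrite p_pr.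
pose t := up_log 4 (2 * n); pose a := 2 ^ t.
have sq_a : a * a = 4 ^ t by rewrite -expnMn.
have le_sq : 2 * n <= a * a by rewrite sq_a up_logP.
have t_ge8 : 8 <= t by rewrite -(@ltn_exp2l 4) // -sq_a; apply: (leq_trans _ le_sq); lia.
have lt_sq : a * a < 8 * n.
  rewrite sq_a -(@prednK t) ?expnS; last lia.
  by have := @up_log_gtn 4 (2 * n) isT; rewrite -/t; lia.
have le_exp : 4 ^ n <= 4 ^ (t * a.+2 + 2 * n %/ 3).
  apply: leq_trans (exp4_le_central_bin n_gt0) _.
  apply: leq_trans (leq_mul (leqnn _) (central_bin_le_of_prime_gap n_gt0 le_sq gap)) _.
  by rewrite mulnA -expnS expnD expnM -sq_a leq_mul // leq_exp2r.
rewrite leq_exp2l // in le_exp.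
have := mul32_le_exp2 t_ge8; rewrite -/a => le_a.
nia.
Qed.

(** * An odd prime labeling of the book graph *)

Definition skip_odd p r := if 2 * r + 3 < p then 2 * r + 3 else 2 * r + 5.

Lemma skip_odd_odd p r : odd (skip_odd p r).
Proof. by rewrite /skip_odd; case: ifP; rewrite oddD oddM. Qed.

Lemma skip_odd_bounds p r : 3 <= skip_odd p r <= 2 * r + 5.
Proof. by rewrite /skip_odd; case: ifP; lia. Qed.

Lemma skip_odd_neq p r : odd p -> skip_odd p r != p.
Proof. by move=> p_odd; rewrite /skip_odd; case: ltnP => ?; apply/eqP; lia. Qed.

Lemma skip_odd_inj p : injective (skip_odd p).
Proof. by move=> r s; rewrite /skip_odd; case: ltnP => ?; case: ltnP => ?; lia. Qed.

Lemma coprime_addn_exp2 a i : odd a -> coprime a (a + 2 ^ i).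
Proof. by move=> a_odd; rewrite /coprime gcdnDl; apply: coprimeXr; rewrite coprimen2. Qed.

Lemma skip_odd_coprimeS p r : coprime (skip_odd p r) (skip_odd p r.+1).
Proof.
have [i ->] : exists i, skip_odd p r.+1 = skip_odd p r + 2 ^ i.
  rewrite /skip_odd; case: ltnP => ?; case: ltnP => ?;
    first [by exists 1; lia | by exists 2; lia].
by apply: coprime_addn_exp2; apply: skip_odd_odd.
Qed.

Lemma prime_coprime_odd_lt p x : prime p -> odd x -> x < 3 * p -> x != p -> coprime p x.
Proof.
move=> p_pr x_odd lt_x neq_x; rewrite prime_coprime //; apply/negP => /dvdnP[q x_eq].
move: x_odd lt_x neq_x; rewrite {}x_eq oddM.
by case: q => [|[|[|q]]] //=; rewrite ?mul1n ?eqxx //; nia.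
Qed.

Lemma mem_odd_labels N m : (m \in [seq 2 * i + 1 | i <- iota 0 N]) = odd_labels N m.
Proof.
apply/mapP/andP => [[i] | [m_odd lt_m]].
  by rewrite mem_iota => i_lt ->; split; [rewrite oddD oddM | lia].
exists m./2; last by have := odd_double_half m; rewrite m_odd -mul2n; lia.
by rewrite mem_iota; have := odd_double_half m; rewrite -mul2n; lia.
Qed.

Lemma odd_labels_surj (V : finType) (l : V -> nat) : injective l ->
  (forall x, odd_labels #|V| (l x)) -> forall m, odd_labels #|V| m -> exists x, l x = m.
Proof.
move=> l_inj l_odd m; rewrite -mem_odd_labels.
have l_uniq : uniq [seq l x | x <- enum V] by rewrite map_inj_uniq ?enum_uniq.
have l_sub : {subset [seq l x | x <- enum V] <= [seq 2 * i + 1 | i <- iota 0 #|V|]}.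
  by move=> _ /mapP[x _ ->]; rewrite mem_odd_labels.
have l_size : size [seq 2 * i + 1 | i <- iota 0 #|V|] <= size [seq l x | x <- enum V].
  by rewrite !size_map size_iota cardT enumT.
have [_ <-] := uniq_min_size l_uniq l_sub l_size.
by case/mapP=> x _ ->; exists x.
Qed.

Lemma card_book_vertex n k : #|book_vertex n k| = n * (k - 2) + 2.
Proof. by rewrite card_sum card_bool card_prod !card_ord addnC. Qed.

Lemma pair_index_lt n d (i : 'I_n) (j : 'I_d) : i * d + j < n * d.
Proof. by have := ltn_ord i; have := ltn_ord j; nia. Qed.

Lemma pair_index_inj d i i' j j' : j < d -> j' < d -> i * d + j = i' * d + j' ->
  i = i' /\ j = j'.
Proof.
move=> lt_j lt_j' eq_ij; have eq_j : j = j'.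
  by rewrite -(modn_small lt_j) -(modn_small lt_j') -(modnMDl i) eq_ij modnMDl.
by split => //; rewrite eq_j in eq_ij; apply/eqP; rewrite -(eqn_pmul2r (_ : 0 < d)); lia.
Qed.

Section BookLabel.

Variables n k p : nat.
Local Notation m := (n * (k - 2)).

Definition book_label (x : book_vertex n k) : nat :=
  match x with
  | inl true => 1
  | inl false => p
  | inr (i, j) => skip_odd p (i * (k - 2) + j)
  end.

Lemma book_label_odd : odd p -> p <= 2 * m + 3 ->
  forall x, odd_labels #|book_vertex n k| (book_label x).
Proof.
move=> p_odd p_le x.
rewrite card_book_vertex /odd_labels; case: x => [[] | [i j]] /=; try lia.
have := skip_odd_bounds p (i * (k - 2) + j); have := pair_index_lt i j.
by rewrite skip_odd_odd; lia.
Qed.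

Lemma book_label_inj : prime p -> odd p -> injective book_label.
Proof.
move=> /prime_gt1 one_lt_p p_odd.
have skip_gt1 r : 1 < skip_odd p r by case/andP: (skip_odd_bounds p r); lia.
have skip_neq r : skip_odd p r != p := skip_odd_neq r p_odd.
move=> [[] | [i j]] [[] | [i' j']] //= eq_l.
- lia.
- by have := skip_gt1 (i' * (k - 2) + j'); rewrite -eq_l.
- lia.
- by have := skip_neq (i' * (k - 2) + j'); rewrite -eq_l eqxx.
- by have := skip_gt1 (i * (k - 2) + j); rewrite eq_l.
- by have := skip_neq (i * (k - 2) + j); rewrite eq_l eqxx.
- have := pair_index_inj (ltn_ord j) (ltn_ord j') (skip_odd_inj eq_l).
  by case=> /val_inj -> /val_inj ->.
Qed.

Lemma book_label_coprime : prime p -> odd p -> 2 * m + 3 < 3 * p ->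
  forall x y, book_edge x y -> gcdn (book_label x) (book_label y) = 1.
Proof.
move=> p_prime p_odd lt_3p x y.
have skip_coprime r : r < m -> gcdn p (skip_odd p r) = 1.
  move=> lt_r; apply/eqP; apply: prime_coprime_odd_lt; rewrite ?skip_odd_odd ?skip_odd_neq //.
  by have := skip_odd_bounds p r; lia.
case: x y => [[] | [i j]] [[] | [i' j']] //= edge; rewrite ?gcd1n ?gcdn1 //.
- exact: skip_coprime (pair_index_lt i' j').
- by rewrite gcdnC; exact: skip_coprime (pair_index_lt i j).
- case/andP: edge => /eqP <- /orP[] /eqP <-; apply/eqP; rewrite addnS.
    exact: skip_odd_coprimeS.
  by rewrite gcdnC; apply: skip_odd_coprimeS.
Qed.

End BookLabel.

Theorem theorem3p4 (n k : nat) : 1 <= n -> 3 <= k ->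
  odd_prime (@book_edge n k).
Proof.
move=> n_gt0 k_ge3; have m_gt0 : 0 < n * (k - 2) by rewrite muln_gt0 n_gt0 subn_gt0.
have [p p_pr /andP[lt_p le_p]] := bertrand (ltn0Sn (n * (k - 2))).
have p_odd : odd p by case: (even_prime p_pr) => // p2; rewrite p2 in lt_p; lia.
have p_le : p <= 2 * (n * (k - 2)) + 3 by lia.
have lt_3p : 2 * (n * (k - 2)) + 3 < 3 * p by lia.
have label_inj : injective (@book_label n k p) by apply: book_label_inj.
have label_odd := @book_label_odd n k p p_odd p_le.
exists (@book_label n k p); split => //; first exact: odd_labels_surj.
exact: book_label_coprime.
Qed.
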